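(* Let $(\Omega,\mathcal F,\mu)$ be a locally finite ($\sigma$-finite) measure space and $\mathcal P_>$ the set of $\mu$-a.s. strictly positive probability densities. Let $\phi:(0,\infty)\to(0,\phi(\infty))$ be surjective, increasing, continuous and affinely bounded ($\phi(x)\le Ax+B$ for some constants $A,B$), and let $\ln_\phi$, $\exp_\phi$ be as in the context. Say that $p,q\in\mathcal P_>$ are $\phi$-connected by an open arc if there is an open interval $]a,b[\supset[0,1]$ such that for every $t\in]a,b[$, $$\int \exp_\phi\bigl((1-t)\ln_\phi p+t\ln_\phi q\bigr)\,d\mu<+\infty.$$ Then this relation is an equivalence relation on $\mathcal P_>$.
   Context: The $\phi$-logarithm is $\ln_\phi(v)=\int_1^v \frac{dx}{\phi(x)}$ for $v>0$; it is strictly increasing and concave, with range $]-m,+\infty[$ where $m=\int_0^1\frac{dx}{\phi(x)}>0$. The $\phi$-exponential $\exp_\phi:]-m,+\infty[\to(0,\infty)$ is its inverse function; it is positive, increasing, convex and differentiable. In the definition of $\phi$-connection the integrand is required to be well defined, i.e. its argument lies $\mu$-a.e. in the domain of $\exp_\phi$. *)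

From HB Require Import structures.
From mathcomp Require Import all_boot all_order all_algebra.
From mathcomp Require Import all_classical all_reals all_analysis.
Set Implicit Arguments. Unset Strict Implicit. Unset Printing Implicit Defensive.
Import Order.TTheory GRing.Theory Num.Theory.
Import numFieldNormedType.Exports.
Local Open Scope classical_set_scope.
Local Open Scope ring_scope.

Section PhiDefs.
Context {R : realType}.

(* ln_phi v = \int_1^v dx / phi x  (oriented integral; Lebesgue integral of the
   continuous positive integrand on the compact interval). *)
Definition lnphi (phi : R -> R) (v : R) : R :=
  if 1 <= v then Rintegral lebesgue_measure `[1, v] (fun x => (phi x)^-1)
  else - Rintegral lebesgue_measure `[v, 1] (fun x => (phi x)^-1).

Definition in_dom_expphi (phi : R -> R) (u : R) : Prop :=
  exists v : R, 0 < v /\ lnphi phi v = u.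

(* exp_phi : inverse of ln_phi on its range (value 0 outside, irrelevant) *)
Definition expphi (phi : R -> R) (u : R) : R :=
  xget 0 [set v : R | 0 < v /\ lnphi phi v = u].

Definition phi_admissible (phi : R -> R) : Prop :=
  (forall x y : R, 0 < x -> x <= y -> phi x <= phi y) /\
  (forall x : R, 0 < x -> {for x, continuous phi}) /\
  (exists L : \bar R, phi @` `]0, +oo[ = [set y : R | 0 < y /\ (y%:E < L)%E]) /\
  (exists A B : R, forall x : R, 0 < x -> phi x <= A * x + B).

Context {d : measure_display} {T : measurableType d}.

Definition pos_density (mu : {measure set T -> \bar R}) (p : T -> R) : Prop :=
  measurable_fun setT p /\
  {ae mu, forall x, 0 < p x} /\
  (\int[mu]_x (p x)%:E = 1)%E.

Definition phi_connected (phi : R -> R) (mu : {measure set T -> \bar R})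
    (p q : T -> R) : Prop :=
  exists a b : R, a < 0 /\ 1 < b /\
    forall t : R, a < t -> t < b ->
      {ae mu, forall x,
          in_dom_expphi phi ((1 - t) * lnphi phi (p x) + t * lnphi phi (q x))} /\
      (\int[mu]_x (expphi phi ((1 - t) * lnphi phi (p x)
                              + t * lnphi phi (q x)))%:E < +oo)%E.

End PhiDefs.

From HB Require Import structures.
From mathcomp Require Import all_boot all_order all_algebra.
From mathcomp Require Import all_classical all_reals all_analysis.
From mathcomp Require Import ring lra measurable_realfun.
Import Order.TTheory GRing.Theory Num.Theory Num.Def.
Import numFieldNormedType.Exports.
Local Open Scope classical_set_scope.
Local Open Scope ring_scope.

(* Since 1/phi is positive and nonincreasing, ln_phi is strictly increasing and
   concave; hence its range is an interval on which exp_phi is increasing and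
   convex.  Reflexivity holds because exp_phi (ln_phi p) = p, and symmetry by
   reversing the parameter t |-> 1 - t.  For transitivity, pick del > 0 such that
   the arcs from p to q and from q to r both extend to [-del, 1 + del].  For t in
   [-eps, 1 + eps], eps = del^2 / (1 + 2 del), the point (1 - t) ln_phi p + t ln_phi r
   is a convex combination of the four endpoints of these extended arcs, so by
   convexity its image under exp_phi is dominated by an integrable combination of
   the four endpoint integrands. *)

Definition mix {R : pzRingType} (s u v : R) : R := (1 - s) * u + s * v.

Lemma mixC {R : comPzRingType} (s u v : R) : mix s u v = mix (1 - s) v u.
Proof. by rewrite /mix; ring. Qed.

Lemma mixxx {R : pzRingType} (s u : R) : mix s u u = u.
Proof. by rewrite /mix -mulrDl subrK mul1r. Qed.

Lemma ler_mix {R : numDomainType} {s u u' v v' : R} : 0 <= s <= 1 ->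
  u <= u' -> v <= v' -> mix s u v <= mix s u' v'.
Proof.
move=> /andP[s0 s1] uu' vv'.
by rewrite lerD // ler_wpM2l // subr_ge0.
Qed.

Lemma mix_gt0 {R : numDomainType} {s u v : R} : 0 <= s <= 1 ->
  0 < u -> 0 < v -> 0 < mix s u v.
Proof.
move=> /andP[s0 s1] u0 v0; rewrite /mix.
have [->|s_gt0] := eqVneq s 0; first by rewrite subr0 mul1r mul0r addr0.
apply: ltr_wpDl; first by rewrite mulr_ge0 // ?subr_ge0 // ltW.
by rewrite mulr_gt0 // lt0r s_gt0.
Qed.

(* At t = -eps, resp. t = 1 + eps, the line through P and S crosses the segment
   joining the two arc ends at -del, resp. 1 + del, where the weight of Q vanishes. *)
Lemma mix_bridge {R : realFieldType} (del t P Q S : R) : 0 < del ->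
  let eps := del ^+ 2 / (1 + 2 * del) in
  mix t P S =
  mix ((t + eps) / (1 + 2 * eps))
    (mix (del / (1 + 2 * del)) (mix (- del) P Q) (mix (- del) Q S))
    (mix ((1 + del) / (1 + 2 * del)) (mix (1 + del) P Q) (mix (1 + del) Q S)).
Proof.
move=> del0 eps; rewrite /mix /eps; field.
by rewrite !gt_eqF //; nra.
Qed.

Lemma mix_bridge_weights {R : realFieldType} {del t : R} : 0 < del ->
  let eps := del ^+ 2 / (1 + 2 * del) in - eps <= t <= 1 + eps ->
  [/\ 0 <= (t + eps) / (1 + 2 * eps) <= 1, 0 <= del / (1 + 2 * del) <= 1
     & 0 <= (1 + del) / (1 + 2 * del) <= 1].
Proof.
move=> del0 eps /andP[t_ge t_le]; have eps0 : 0 <= eps by rewrite divr_ge0 ?sqr_ge0 //; lra.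
by split; rewrite divr_ge0 ?ler_pdivrMr /=; lra.
Qed.

Lemma nondecreasing_interval_measurable {R : realType} (D : set R) (f : R -> R) :
  is_interval D -> (forall x y, D x -> D y -> x <= y -> f x <= f y) ->
  measurable_fun D f.
Proof.
move=> iD f_nd.
apply: (measurability (@RGenCInfty.G R)) => [|/= _ [_] [r] -> <-].
  exact: RGenCInfty.measurableE.
move=> mD; apply: is_interval_measurable => s t [Ds fs] [Dt ft] u /andP[su ut].
have Du : D u by apply: (iD s t) => //; apply/andP; split.
split => //; move: fs; rewrite /= !in_itv /= !andbT => /le_trans; apply.
exact: f_nd.
Qed.

Definition phi_regular {R : realType} (phi : R -> R) : Prop :=
  [/\ forall x, 0 < x -> 0 < phi x,
      forall x y, 0 < x -> x <= y -> phi x <= phi y &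
      forall x, 0 < x -> {for x, continuous phi}].

Section lnphi.
Context {R : realType} {phi : R -> R}.
Hypothesis hphi : phi_regular phi.
Let phi_gt0 : forall x, 0 < x -> 0 < phi x. Proof. by case: hphi. Qed.
Let phi_nd : forall x y, 0 < x -> x <= y -> phi x <= phi y. Proof. by case: hphi. Qed.
Let phi_cont : forall x, 0 < x -> {for x, continuous phi}. Proof. by case: hphi. Qed.

Lemma integrable_invphi (x y : R) : 0 < x ->
  lebesgue_measure.-integrable `[x, y] (EFin \o (fun z => (phi z)^-1)).
Proof.
move=> x0; apply: continuous_compact_integrable; first exact: segment_compact.
apply: continuous_in_subspaceT => z; rewrite inE /= in_itv /= => /andP[xz _].
have z0 : 0 < z := lt_le_trans x0 xz.
by apply: continuousV; [rewrite gt_eqF ?phi_gt0 | exact: phi_cont].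
Qed.

Lemma Rintegral_invphi_cat (x y z : R) : 0 < x -> x <= y -> y <= z ->
  Rintegral lebesgue_measure `[x, z] (fun w => (phi w)^-1) =
  Rintegral lebesgue_measure `[x, y] (fun w => (phi w)^-1) +
  Rintegral lebesgue_measure `[y, z] (fun w => (phi w)^-1).
Proof.
move=> x0 xy yz.
have := @Rintegral_itvB R (fun w => (phi w)^-1) (BLeft x) (BRight z) y.
rewrite Rintegral_itv_obnd_cbnd; last first.
  move: (integrable_invphi x z x0); apply: integrableS => //.
  by apply: subset_itvr; rewrite bnd_simp.
move=> /(_ (integrable_invphi x z x0)); rewrite !bnd_simp => /(_ xy yz) <-.
by rewrite addrC subrK.
Qed.

Lemma lnphiB {x y : R} : 0 < x -> x <= y ->
  lnphi phi y - lnphi phi x = Rintegral lebesgue_measure `[x, y] (fun z => (phi z)^-1).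
Proof.
move=> x0 xy; rewrite /lnphi.
have [x1|x1] := leP 1 x.
  by rewrite (le_trans x1 xy) (Rintegral_invphi_cat 1 x y) //; lra.
have [y1|y1] := leP 1 y.
  by rewrite (Rintegral_invphi_cat x 1 y) ?(ltW x1) //; lra.
by rewrite (Rintegral_invphi_cat x y 1) ?(ltW y1) //; lra.
Qed.

Lemma lnphiB_bounds {x y : R} : 0 < x -> x <= y ->
  (y - x) / phi y <= lnphi phi y - lnphi phi x <= (y - x) / phi x.
Proof.
move=> x0 xy; rewrite lnphiB //.
have measure_xy : fine (lebesgue_measure `[x, y]) = y - x.
  by rewrite lebesgue_measure_itv /= lte_fin; case: ltgtP xy => //= ->; rewrite subrr.
have cst_integrable (c : R) : lebesgue_measure.-integrable `[x, y] (EFin \o cst c).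
  apply: continuous_compact_integrable; first exact: segment_compact.
  by apply: continuous_subspaceT => z; exact: cvg_cst.
rewrite -measure_xy !(mulrC _ (_^-1)) -!Rintegral_cst //.
have invphi_between z : x <= z <= y -> (phi y)^-1 <= (phi z)^-1 <= (phi x)^-1.
  move=> /andP[xz zy]; have z0 : 0 < z := lt_le_trans x0 xz.
  by rewrite !lef_pV2 ?posrE ?phi_gt0 ?phi_nd // (lt_le_trans z0).
apply/andP; split; apply: le_Rintegral => //.
- exact: cst_integrable.
- exact: integrable_invphi.
- by move=> z; rewrite /= in_itv /= => /invphi_between /andP[].
- exact: integrable_invphi.
- exact: cst_integrable.
- by move=> z; rewrite /= in_itv /= => /invphi_between /andP[].
Qed.

Lemma lnphi_lt {x y : R} : 0 < x -> x < y -> lnphi phi x < lnphi phi y.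
Proof.
move=> x0 xy; rewrite -subr_gt0.
have /andP[+ _] := lnphiB_bounds x0 (ltW xy); apply: lt_le_trans.
by rewrite divr_gt0 ?phi_gt0 ?subr_gt0 // (lt_trans x0).
Qed.

Lemma lnphi_le {x y : R} : 0 < x -> x <= y -> lnphi phi x <= lnphi phi y.
Proof.
by move=> x0; rewrite le_eqVlt => /predU1P[->//|/(lnphi_lt x0)/ltW].
Qed.

Lemma lnphi_lipschitz {a x y : R} : 0 < a -> a <= x -> a <= y ->
  `|lnphi phi y - lnphi phi x| <= `|y - x| / phi a.
Proof.
move=> a0; wlog xy : x y / x <= y => [hwlog ax ay|ax _].
  by case: (leP x y) => [/hwlog|/ltW/hwlog]; last rewrite distrC (distrC y); apply.
have x0 : 0 < x := lt_le_trans a0 ax.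
rewrite !ger0_norm ?subr_ge0 ?lnphi_le //.
have /andP[_ +] := lnphiB_bounds x0 xy; move/le_trans; apply.
by rewrite ler_wpM2l ?subr_ge0 // lef_pV2 ?posrE ?phi_gt0 ?phi_nd.
Qed.

Lemma lnphi_continuous (x : R) : 0 < x -> {for x, continuous (lnphi phi)}.
Proof.
move=> x0; have a0 : 0 < x / 2 by rewrite divr_gt0.
apply/cvgrPdist_le => e e0; near=> z.
have az : x / 2 <= z by near: z; apply: lt_le_nbhsr; lra.
apply: le_trans (lnphi_lipschitz a0 az _) _; first lra.
rewrite ler_pdivrMr ?phi_gt0 //; near: z.
by apply: cvgr_dist_le; [exact: cvg_id | rewrite mulr_gt0 ?phi_gt0].
Unshelve. all: by end_near.
Qed.

Lemma lnphi_concave {c x y : R} : 0 <= c <= 1 -> 0 < x -> 0 < y ->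
  mix c (lnphi phi x) (lnphi phi y) <= lnphi phi (mix c x y).
Proof.
move=> c01; wlog xy : c x y c01 / x <= y => [hwlog x0 y0|x0 _].
  have c01' : 0 <= 1 - c <= 1 by move: c01 => /andP[? ?]; apply/andP; split; lra.
  case: (leP x y) => [xy|/ltW yx]; first exact: hwlog.
  by rewrite !(mixC c); apply: hwlog.
move: c01 => /andP[c0 c1]; have c1' : 0 <= 1 - c by lra.
set z := mix c x y.
have xz : x <= z by rewrite /z /mix; nra.
have zy : z <= y by rewrite /z /mix; nra.
have z0 : 0 < z := lt_le_trans x0 xz.
have /andP[lower _] := lnphiB_bounds x0 xz.
have /andP[_ upper] := lnphiB_bounds z0 zy.
have zx : z - x = c * (y - x) by rewrite /z /mix; ring.
have yz : y - z = (1 - c) * (y - x) by rewrite /z /mix; ring.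
rewrite zx in lower; rewrite yz in upper; rewrite /mix.
(* both chords through z are compared with the slope 1 / phi z *)
set K := (phi z)^-1 in lower upper.
have := ler_wpM2l c1' lower; have := ler_wpM2l c0 upper.
nra.
Qed.

Lemma in_dom_lnphi {v : R} : 0 < v -> in_dom_expphi phi (lnphi phi v).
Proof. by exists v. Qed.

Lemma in_dom_expphi_interval : is_interval (in_dom_expphi phi).
Proof.
move=> _ _ [v1 [v10 <-]] [v2 [v20 <-]] u /andP[u1 u2].
have [v21|v12] := ltP v2 v1; first by have := lnphi_lt v20 v21; lra.
have ln_cont : {within `[v1, v2], continuous (lnphi phi)}.
  apply: continuous_in_subspaceT => z; rewrite inE /= in_itv /= => /andP[v1z _].
  exact/lnphi_continuous/(lt_le_trans v10).
have u_between : minr (lnphi phi v1) (lnphi phi v2) <= u <= maxr (lnphi phi v1) (lnphi phi v2).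
  by rewrite min_l ?max_r ?lnphi_le // u1 u2.
have [c] := IVT v12 ln_cont u_between.
by rewrite in_itv /= => /andP[v1c _] <-; exists c; split => //; exact: lt_le_trans v1c.
Qed.

Lemma expphi_spec {u : R} : in_dom_expphi phi u ->
  0 < expphi phi u /\ lnphi phi (expphi phi u) = u.
Proof. exact: xgetPex. Qed.

Lemma expphi_ge0 (u : R) : 0 <= expphi phi u.
Proof. by rewrite /expphi; case: xgetP => // v _ [/ltW]. Qed.

Lemma expphi_notin_dom (u : R) : ~ in_dom_expphi phi u -> expphi phi u = 0.
Proof. by move=> du; apply: xgetPN => v [v0 lnv]; apply: du; exists v. Qed.

Lemma lnphiK {v : R} : 0 < v -> expphi phi (lnphi phi v) = v.
Proof.
move=> v0; have [w0 ln_wv] := expphi_spec (in_dom_lnphi v0).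
apply/eqP; rewrite eq_le !leNgt; apply/andP; split; apply/negP.
- by move/(lnphi_lt v0); lra.
- by move/(lnphi_lt w0); lra.
Qed.

Lemma expphi_le {u v : R} : in_dom_expphi phi u -> in_dom_expphi phi v ->
  u <= v -> expphi phi u <= expphi phi v.
Proof.
move=> /expphi_spec[eu_gt0 eu] /expphi_spec[ev_gt0 ev] uv.
by rewrite leNgt; apply/negP => /(lnphi_lt ev_gt0); lra.
Qed.

Lemma in_dom_mix {c u v : R} : 0 <= c <= 1 ->
  in_dom_expphi phi u -> in_dom_expphi phi v -> in_dom_expphi phi (mix c u v).
Proof.
move=> /andP[c0 c1] du dv.
have [uv|vu] := leP u v.
  by apply: (in_dom_expphi_interval _ _ du dv); rewrite /mix; apply/andP; split; nra.
by apply: (in_dom_expphi_interval _ _ dv du); rewrite /mix; apply/andP; split; nra.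
Qed.

Lemma expphi_convex {c u v : R} : 0 <= c <= 1 ->
  in_dom_expphi phi u -> in_dom_expphi phi v ->
  expphi phi (mix c u v) <= mix c (expphi phi u) (expphi phi v).
Proof.
move=> c01 du dv; have [eu_gt0 eu] := expphi_spec du; have [ev_gt0 ev] := expphi_spec dv.
have [emix_gt0 emix] := expphi_spec (in_dom_mix c01 du dv).
have := lnphi_concave c01 eu_gt0 ev_gt0; rewrite eu ev -{1}emix.
move=> ln_le; rewrite leNgt; apply/negP => /(lnphi_lt (mix_gt0 c01 eu_gt0 ev_gt0)).
lra.
Qed.

Lemma expphi_convex2 {k l l' a b c e : R} :
  0 <= k <= 1 -> 0 <= l <= 1 -> 0 <= l' <= 1 ->
  in_dom_expphi phi a -> in_dom_expphi phi b ->
  in_dom_expphi phi c -> in_dom_expphi phi e ->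
  in_dom_expphi phi (mix k (mix l a b) (mix l' c e)) /\
  expphi phi (mix k (mix l a b) (mix l' c e)) <=
    mix k (mix l (expphi phi a) (expphi phi b)) (mix l' (expphi phi c) (expphi phi e)).
Proof.
move=> k01 l01 l'01 da db dc de.
have dab := in_dom_mix l01 da db; have dce := in_dom_mix l'01 dc de.
split; first exact: in_dom_mix.
apply: le_trans (expphi_convex k01 dab dce) _.
by apply: ler_mix k01 _ _; exact: expphi_convex.
Qed.

Lemma measurable_in_dom_expphi : measurable (in_dom_expphi phi).
Proof. exact: is_interval_measurable in_dom_expphi_interval. Qed.

Lemma measurable_lnphi : measurable_fun (`]0, +oo[ : set R) (lnphi phi).
Proof.
apply: nondecreasing_interval_measurable; first exact: interval_is_interval.
by move=> x y; rewrite /= !in_itv /= !andbT => x0 _; exact: lnphi_le.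
Qed.

Lemma measurable_expphi : measurable_fun setT (expphi phi).
Proof.
have mD := measurable_in_dom_expphi.
rewrite -(setUv (in_dom_expphi phi)); apply/measurable_funU => //; first exact: measurableC.
split.
  apply: nondecreasing_interval_measurable in_dom_expphi_interval _ => u v.
  exact: expphi_le.
have expphi0 : {in ~` in_dom_expphi phi, cst 0 =1 expphi phi}.
  by move=> u /set_mem /expphi_notin_dom ->.
exact: eq_measurable_fun expphi0 (measurable_cst _).
Qed.
End lnphi.

Section nonnegative_integrals.
Context {d : measure_display} {T : measurableType d} {R : realType}.
Context {mu : {measure set T -> \bar R}}.
Local Open Scope ereal_scope.

Lemma ge0_le_integral_nomeas (f g : T -> \bar R) :
  (forall x, 0 <= f x) -> (forall x, f x <= g x) ->
  \int[mu]_x f x <= \int[mu]_x g x.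
Proof.
move=> f0 fg; have g0 x := le_trans (f0 x) (fg x).
rewrite !ge0_integralTE //; apply: ereal_sup_le => _ [h hf <-].
by exists h => //= x; exact: le_trans (hf x) (fg x).
Qed.

Lemma ge0_integral_le_setT (S : set T) (f : T -> \bar R) :
  (forall x, 0 <= f x) -> \int[mu]_(x in S) f x <= \int[mu]_x f x.
Proof.
move=> f0; rewrite integral_mkcond; apply: ge0_le_integral_nomeas => x;
  by rewrite patchE; case: ifPn.
Qed.

Lemma ge0_integrable_restrict (S : set T) (f : T -> R) : measurable S ->
  measurable_fun S f -> (forall x, (0 <= f x)%R) ->
  \int[mu]_x (f x)%:E < +oo -> mu.-integrable S (EFin \o f).
Proof.
move=> mS mf f0 fioo; apply/integrableP; split; first exact/measurable_EFinP.
apply: le_lt_trans fioo.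
rewrite (eq_integral (fun x => (f x)%:E)) => [|x _]; last by rewrite gee0_abs ?lee_fin.
by apply: ge0_integral_le_setT => x; rewrite lee_fin.
Qed.

Lemma integrable_mix (S : set T) (c : R) (f g : T -> R) : measurable S ->
  mu.-integrable S (EFin \o f) -> mu.-integrable S (EFin \o g) ->
  mu.-integrable S (EFin \o (fun x => mix c (f x) (g x))).
Proof.
move=> mS intf intg.
have -> : EFin \o (fun x => mix c (f x) (g x)) =
    (fun x => (1 - c)%:E * (EFin \o f) x) \+ (fun x => c%:E * (EFin \o g) x).
  by apply/funext => x; rewrite /mix /= EFinD !EFinM.
by apply: integrableD => //; exact: integrableZl.
Qed.

(* [g] need not be measurable: it is compared with the measurable function equal
   to [F] on [S] and to [+oo] off [S]. *)
Lemma integrable_dominated_lty {S : set T} {g F : T -> R} : measurable S ->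
  {ae mu, forall x, S x} -> mu.-integrable S (EFin \o F) ->
  (forall x, (0 <= g x)%R) -> (forall x, S x -> (g x <= F x)%R) ->
  \int[mu]_x (g x)%:E < +oo.
Proof.
move=> mS aeS /integrableP[mF Fioo] g0 gF.
pose G x := if x \in S then (F x)%:E else +oo.
have gG x : (g x)%:E <= G x.
  by rewrite /G; case: ifPn => [/set_mem/gF|_]; rewrite ?lee_fin ?leey.
have G0 x : 0 <= G x by apply: le_trans (gG x); rewrite lee_fin.
have mG : measurable_fun setT G.
  have inS : (fun x => x \in S) @^-1` [set true] = S.
    by apply/seteqP; split => x /=; [move/set_mem | move/mem_set].
  apply: measurable_fun_if => //.
  - by apply: (measurable_fun_bool true); rewrite setTI inS.
  - by rewrite setTI inS.
have [N [mN muN0 notSN]] := aeS.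
have g0' x : 0 <= (g x)%:E by rewrite lee_fin.
apply: le_lt_trans (ge0_le_integral_nomeas _ _ g0' gG) _.
rewrite (ge0_negligible_integral _ _ _ _ muN0) //.
apply: le_lt_trans Fioo; rewrite integral_mkcond [leRHS]integral_mkcond.
apply: ge0_le_integral_nomeas => x; rewrite !patchE.
  by case: ifPn => // _; exact: G0.
case: ifPn => [/set_mem [_ xN]|_]; last by case: ifPn => // _; exact: abse_ge0.
have xS : S x by apply: contra_notP xN => /notSN.
by rewrite /G mem_set //= lee_abs.
Qed.
End nonnegative_integrals.

Definition phi_arc {R : realType} {T : Type} (phi : R -> R) (p q : T -> R)
    (s : R) (x : T) : R :=
  mix s (lnphi phi (p x)) (lnphi phi (q x)).

Definition phi_arc_finite {R : realType} {d : measure_display} {T : measurableType d}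
    (phi : R -> R) (mu : {measure set T -> \bar R}) (p q : T -> R) (s : R) : Prop :=
  {ae mu, forall x, in_dom_expphi phi (phi_arc phi p q s x)} /\
  (\int[mu]_x (expphi phi (phi_arc phi p q s x))%:E < +oo)%E.

Definition arc_domain {R : realType} {T : Type} (phi : R -> R) (p q : T -> R)
    (s : R) : set T :=
  [set x | 0 < p x /\ 0 < q x /\ in_dom_expphi phi (phi_arc phi p q s x)].

Section phi_arcs.
Context {R : realType} {d : measure_display} {T : measurableType d}.
Variables (mu : {measure set T -> \bar R}) (phi : R -> R).
Hypothesis hphi : phi_regular phi.

Lemma measurable_gt0 {p : T -> R} : measurable_fun setT p -> measurable [set x | 0 < p x].
Proof.
move=> mp; have -> : [set x | 0 < p x] = setT `&` p @^-1` `]0, +oo[.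
  by apply/seteqP; split => x /=; rewrite in_itv /= andbT // => -[].
exact: mp.
Qed.

Lemma measurable_phi_arc (p q : T -> R) (s : R) :
  measurable_fun setT p -> measurable_fun setT q ->
  measurable_fun [set x | 0 < p x /\ 0 < q x] (phi_arc phi p q s).
Proof.
move=> mp mq; set D := [set x | 0 < p x /\ 0 < q x].
have mD : measurable D := measurableI _ _ (measurable_gt0 mp) (measurable_gt0 mq).
have mlnphi (f : T -> R) : measurable_fun setT f -> (forall x, D x -> 0 < f x) ->
    measurable_fun D (fun x => lnphi phi (f x)).
  move=> mf f_gt0; apply: (measurable_comp (measurable_itv `]0, +oo[)).
  - by move=> _ [x Dx <-]; rewrite /= in_itv /= andbT f_gt0.
  - exact: measurable_lnphi hphi.
  - exact: measurable_funS mf.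
apply: measurable_funD; apply: measurable_funM; try exact: measurable_cst.
- by apply: mlnphi => // x [].
- by apply: mlnphi => // x [].
Qed.

Lemma measurable_arc_domain (p q : T -> R) (s : R) :
  measurable_fun setT p -> measurable_fun setT q ->
  measurable (arc_domain phi p q s).
Proof.
move=> mp mq; have mpq := measurableI _ _ (measurable_gt0 mp) (measurable_gt0 mq).
have -> : arc_domain phi p q s =
    [set x | 0 < p x /\ 0 < q x] `&` phi_arc phi p q s @^-1` in_dom_expphi phi.
  by apply/seteqP; split => [x [? [? ?]] | x [[? ?] ?]].
exact: measurable_phi_arc mp mq mpq _ (measurable_in_dom_expphi hphi).
Qed.

Lemma integrable_phi_arc (p q : T -> R) (s : R) :
  measurable_fun setT p -> measurable_fun setT q -> phi_arc_finite phi mu p q s ->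
  mu.-integrable (arc_domain phi p q s) (EFin \o (expphi phi \o phi_arc phi p q s)).
Proof.
move=> mp mq [_ fin]; apply: ge0_integrable_restrict => //.
- exact: measurable_arc_domain.
- apply: measurableT_comp; first exact: measurable_expphi hphi.
  apply: (measurable_funS _ _ (measurable_phi_arc _ _ s mp mq)) => [|x [? []]] //.
  exact: measurableI _ _ (measurable_gt0 mp) (measurable_gt0 mq).
- by move=> x; exact: expphi_ge0.
Qed.

Lemma ae_arc_domain (p q : T -> R) (s : R) :
  {ae mu, forall x, 0 < p x} -> {ae mu, forall x, 0 < q x} ->
  phi_arc_finite phi mu p q s -> {ae mu, forall x, arc_domain phi p q s x}.
Proof.
move=> p_gt0 q_gt0 [dom _].
by apply: filterS (filterI p_gt0 (filterI q_gt0 dom)) => x.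
Qed.

Lemma pos_density_integrable {p : T -> R} : pos_density mu p ->
  mu.-integrable [set x | 0 < p x] (EFin \o p).
Proof.
move=> [mp [p_gt0 int_p]]; have mS := measurable_gt0 mp.
apply/integrableP; split; first exact/measurable_EFinP/measurable_funTS.
rewrite (eq_integral (fun x => (p x)%:E)) => [|x /set_mem px]; last first.
  by rewrite gee0_abs // lee_fin ltW.
rewrite integral_mkcond (ae_eq_integral (fun x => (p x)%:E)) ?int_p ?ltry //.
- exact/(measurable_restrictT _ mS)/measurable_EFinP/measurable_funTS.
- exact/measurable_EFinP.
- by apply: filterS p_gt0 => x px _; rewrite patchE mem_set.
Qed.

Lemma phi_arc_finite_refl (p : T -> R) (t : R) : pos_density mu p ->
  phi_arc_finite phi mu p p t.
Proof.
move=> dp; have [mp [p_gt0 _]] := dp.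
have arc_pp x : phi_arc phi p p t x = lnphi phi (p x) by rewrite /phi_arc mixxx.
split; first by apply: filterS p_gt0 => x px; rewrite arc_pp; exact: in_dom_lnphi.
apply: (integrable_dominated_lty (measurable_gt0 mp) p_gt0 (pos_density_integrable dp)).
- by move=> x; exact: expphi_ge0.
- by move=> x px; rewrite arc_pp lnphiK.
Qed.

Lemma phi_arc_finite_sym {p q : T -> R} {s : R} :
  phi_arc_finite phi mu p q s -> phi_arc_finite phi mu q p (1 - s).
Proof.
have arc_qp x : phi_arc phi q p (1 - s) x = phi_arc phi p q s x.
  by rewrite /phi_arc [in RHS]mixC.
move=> [dom fin]; split; first by apply: filterS dom => x; rewrite arc_qp.
by under eq_integral do rewrite arc_qp.
Qed.

Lemma phi_arc_finite_bridge {p q r : T -> R} {del t : R} :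
  pos_density mu p -> pos_density mu q -> pos_density mu r -> 0 < del ->
  phi_arc_finite phi mu p q (- del) -> phi_arc_finite phi mu q r (- del) ->
  phi_arc_finite phi mu p q (1 + del) -> phi_arc_finite phi mu q r (1 + del) ->
  let eps := del ^+ 2 / (1 + 2 * del) in
  - eps <= t <= 1 + eps -> phi_arc_finite phi mu p r t.
Proof.
move=> [mp [p_gt0 _]] [mq [q_gt0 _]] [mr [r_gt0 _]] del0 finA finB finC finD eps t_range.
have [kap01 lam01 lam'01] := mix_bridge_weights del0 t_range.
set kap := (t + eps) / (1 + 2 * eps) in kap01.
set lam := del / (1 + 2 * del) in lam01.
set lam' := (1 + del) / (1 + 2 * del) in lam'01.
set S := arc_domain phi p q (- del) `&` arc_domain phi q r (- del) `&`
  (arc_domain phi p q (1 + del) `&` arc_domain phi q r (1 + del)).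
have mS : measurable S.
  by apply: measurableI; apply: measurableI; exact: measurable_arc_domain.
have aeS : {ae mu, forall x, S x}.
  apply: filterI; apply: filterI; exact: ae_arc_domain.
pose e (f g : T -> R) (s : R) (x : T) := expphi phi (phi_arc phi f g s x).
pose F x := mix kap (mix lam (e p q (- del) x) (e q r (- del) x))
                    (mix lam' (e p q (1 + del) x) (e q r (1 + del) x)).
have bound x : S x -> in_dom_expphi phi (phi_arc phi p r t x) /\
    expphi phi (phi_arc phi p r t x) <= F x.
  move=> [[[_ [_ dA]] [_ [_ dB]]] [[_ [_ dC]] [_ [_ dD]]]].
  rewrite [phi_arc _ _ _ t x](mix_bridge del t _ (lnphi phi (q x)) _ del0).
  exact (expphi_convex2 hphi kap01 lam01 lam'01 dA dB dC dD).
have int_e (f g : T -> R) (s : R) : measurable_fun setT f -> measurable_fun setT g ->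
    phi_arc_finite phi mu f g s -> S `<=` arc_domain phi f g s ->
    mu.-integrable S (EFin \o e f g s).
  move=> mf mg fin SD.
  apply: integrableS (measurable_arc_domain _ _ s mf mg) mS SD _.
  exact: integrable_phi_arc.
have intF : mu.-integrable S (EFin \o F).
  apply: integrable_mix => //; apply: integrable_mix => //; apply: int_e => //.
  - by move=> x [[]].
  - by move=> x [[_]].
  - by move=> x [_ []].
  - by move=> x [_ [_]].
split; first by move: aeS; apply: filterS => x /bound[].
apply: (integrable_dominated_lty mS aeS intF).
- by move=> x; exact: expphi_ge0.
- by move=> x /bound[].
Qed.

Lemma phi_connected_margin (p q : T -> R) : phi_connected phi mu p q ->
  exists2 m, 0 < m & forall s, - m < s < 1 + m -> phi_arc_finite phi mu p q s.
Proof.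
move=> [a [b [a0 [b1 fin]]]]; exists (minr (- a) (b - 1)).
  by rewrite lt_min; apply/andP; split; lra.
have m_a : minr (- a) (b - 1) <= - a by rewrite ge_min lexx.
have m_b : minr (- a) (b - 1) <= b - 1 by rewrite ge_min lexx orbT.
by move=> s /andP[s_gt s_lt]; apply: fin; lra.
Qed.

Lemma phi_connected_refl (p : T -> R) : pos_density mu p -> phi_connected phi mu p p.
Proof.
move=> dp; exists (-1), 2; do 2![split; first lra].
by move=> t _ _; exact: phi_arc_finite_refl.
Qed.

Lemma phi_connected_sym (p q : T -> R) :
  phi_connected phi mu p q -> phi_connected phi mu q p.
Proof.
move=> [a [b [a0 [b1 fin]]]]; exists (1 - b), (1 - a); do 2![split; first lra].
move=> t ta tb; have : phi_arc_finite phi mu p q (1 - t) by apply: fin; lra.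
by move/phi_arc_finite_sym; rewrite opprB addrC subrK.
Qed.

Lemma phi_connected_trans (p q r : T -> R) :
  pos_density mu p -> pos_density mu q -> pos_density mu r ->
  phi_connected phi mu p q -> phi_connected phi mu q r -> phi_connected phi mu p r.
Proof.
move=> dp dq dr /phi_connected_margin[m1 m1_gt0 fin1] /phi_connected_margin[m2 m2_gt0 fin2].
set del := minr m1 m2 / 2.
have del_gt0 : 0 < del by rewrite divr_gt0 // lt_min m1_gt0.
have min_m1 : minr m1 m2 <= m1 by rewrite ge_min lexx.
have min_m2 : minr m1 m2 <= m2 by rewrite ge_min lexx orbT.
have [del_m1 del_m2] : del < m1 /\ del < m2 by rewrite /del; split; lra.
set eps := del ^+ 2 / (1 + 2 * del).
have eps_gt0 : 0 < eps by rewrite divr_gt0 ?exprn_gt0 //; lra.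
exists (- eps), (1 + eps); do 2![split; first lra].
move=> t t_gt t_lt; apply: (phi_arc_finite_bridge dp dq dr del_gt0).
- by apply: fin1; lra.
- by apply: fin2; lra.
- by apply: fin1; lra.
- by apply: fin2; lra.
- by rewrite -/eps; apply/andP; split; lra.
Qed.
End phi_arcs.

Lemma phi_admissible_regular {R : realType} (phi : R -> R) :
  phi_admissible phi -> phi_regular phi.
Proof.
move=> [phi_nd [phi_cont [[L phi_range] _]]]; split => // x x0.
have : (phi @` `]0, +oo[) (phi x) by exists x => //=; rewrite in_itv /= andbT.
by rewrite phi_range => -[].
Qed.

Theorem proposition19 (R : realType) (d : measure_display) (T : measurableType d)
  (mu : {measure set T -> \bar R}) (phi : R -> R) :
  sigma_finite setT mu ->
  phi_admissible phi ->
  (forall p, pos_density mu p -> phi_connected phi mu p p) /\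
  (forall p q, pos_density mu p -> pos_density mu q ->
     phi_connected phi mu p q -> phi_connected phi mu q p) /\
  (forall p q r, pos_density mu p -> pos_density mu q -> pos_density mu r ->
     phi_connected phi mu p q -> phi_connected phi mu q r ->
     phi_connected phi mu p r).
Proof.
move=> _ /phi_admissible_regular hphi; split; first exact: phi_connected_refl.
split; first by move=> p q _ _; exact: phi_connected_sym.
exact: phi_connected_trans.
Qed.
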